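(* Let $\mathbb X,\mathbb Y$ be Euclidean spaces, $\varphi\colon\mathbb X\to\mathbb R$ locally Lipschitz, $\Phi\colon\mathbb X\rightrightarrows\mathbb Y$ with closed graph, $\bar y\in\operatorname{Im}\Phi$, and consider (P): $\min\{\varphi(x)\mid\bar y\in\Phi(x)\}$. Let $\bar x$ be feasible for (P), $\gamma_0\geq1$, $\gamma\geq1$, and $u\in\mathbb S_{\mathbb X}$. Then $u$ is critical of order $(\gamma_0,\gamma)$ for (P) at $\bar x$ if and only if there exist sequences $u_k\to u$ and $t_k\downarrow 0$ such that $$\frac{\operatorname{dist}(\varphi(\bar x),M_0(\bar x+t_ku_k))}{(t_k\|u_k\|)^{\gamma_0}}\to0,\qquad \frac{\operatorname{dist}(\bar y,\Phi(\bar x+t_ku_k))}{(t_k\|u_k\|)^{\gamma}}\to0,$$ where $M_0(x):=\varphi(x)+\mathbb R_+$. Moreover, if $\gamma_0=\gamma$, this is further equivalent to $u\in\ker D_\gamma M(\bar x,(\varphi(\bar x),\bar y))$ for the mapping $M\colon\mathbb X\rightrightarrows\mathbb R\times\mathbb Y$, $M(x):=M_0(x)\times\Phi(x)$.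
   Context: $u\in\mathbb X$ is critical of order $(\gamma_0,\gamma)$ for (P) at $\bar x$ if there are $u_k\to u$, $\alpha_k\to0$ in $\mathbb R$, $v_k\to0$ in $\mathbb Y$, $t_k\downarrow0$ with $(\bar x+t_ku_k,\varphi(\bar x)+(t_k\|u_k\|)^{\gamma_0}\alpha_k)\in\operatorname{epi}\varphi$ and $(\bar x+t_ku_k,\bar y+(t_k\|u_k\|)^\gamma v_k)\in\operatorname{gph}\Phi$ for all $k$. For a mapping $M$ with closed graph and $(\bar x,\bar z)\in\operatorname{gph}M$, the graphical pseudo-derivative of order $\gamma$, $D_\gamma M(\bar x,\bar z)$, assigns to $u$ all $w$ such that there are $u_k\to u$, $w_k\to w$, $t_k\downarrow0$ with $(\bar x+t_ku_k,\bar z+(t_k\|u_k\|)^\gamma w_k)\in\operatorname{gph}M$; $\ker D_\gamma M(\bar x,\bar z)=\{u\mid 0\in D_\gamma M(\bar x,\bar z)(u)\}$. $\mathbb S_{\mathbb X}$ is the unit sphere. *)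

(* Euclidean spaces X = R^n, Y = R^m realised as
   row vectors 'rV[R]_n with the EUCLIDEAN norm [enorm] defined below
   (the library's norm on 'rV is the sup norm; the topology is the same). *)
From HB Require Import structures.
From mathcomp Require Import all_boot all_order all_algebra.
From mathcomp Require Import all_classical all_reals all_analysis.
Set Implicit Arguments. Unset Strict Implicit. Unset Printing Implicit Defensive.
Import Order.TTheory GRing.Theory Num.Theory.
Import numFieldNormedType.Exports.
Local Open Scope classical_set_scope.
Local Open Scope ring_scope.

Definition enorm {R : realType} {n : nat} (v : 'rV[R]_n) : R :=
  Num.sqrt (\sum_(i < n) v ord0 i ^+ 2).

(* distance from a point to a set, in the extended reals (+oo for the empty set) *)
Definition setdist_rV {R : realType} {n : nat} (a : 'rV[R]_n) (S : set 'rV[R]_n) : \bar R :=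
  ereal_inf [set (enorm (a - s))%:E | s in S].

Definition setdist_R {R : realType} (a : R) (S : set R) : \bar R :=
  ereal_inf [set (`|a - s|)%:E | s in S].

Definition locally_lipschitz {R : realType} {n : nat} (f : 'rV[R]_n -> R) : Prop :=
  forall x : 'rV[R]_n, exists (L r : R), 0 < r /\
    forall y z : 'rV[R]_n, enorm (y - x) < r -> enorm (z - x) < r ->
      `|f y - f z| <= L * enorm (y - z).

Definition gph {R : realType} {n : nat} {Z : Type} (M : 'rV[R]_n -> set Z)
  : set ('rV[R]_n * Z) := [set p | M p.1 p.2].

Definition epi {R : realType} {n : nat} (f : 'rV[R]_n -> R) : set ('rV[R]_n * R) :=
  [set p | f p.1 <= p.2].

(* t_k decreasing to 0: positive and converging to 0 *)
Definition tends_down_to0 {R : realType} (t : nat -> R) : Prop :=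
  (forall k, 0 < t k) /\ t @ \oo --> (0 : R).

Definition critical {R : realType} {n m : nat} (phi : 'rV[R]_n -> R)
  (Phi : 'rV[R]_n -> set 'rV[R]_m) (ybar : 'rV[R]_m) (xbar : 'rV[R]_n)
  (g0 g : R) (u : 'rV[R]_n) : Prop :=
  exists (uk : nat -> 'rV[R]_n) (ak : nat -> R) (vk : nat -> 'rV[R]_m)
         (tk : nat -> R),
    uk @ \oo --> u /\ ak @ \oo --> (0 : R) /\ vk @ \oo --> (0 : 'rV[R]_m) /\
    tends_down_to0 tk /\
    (forall k, epi phi (xbar + tk k *: uk k,
                        phi xbar + powR (tk k * enorm (uk k)) g0 * ak k)) /\
    (forall k, gph Phi (xbar + tk k *: uk k,
                        ybar + powR (tk k * enorm (uk k)) g *: vk k)).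

Definition pseudo_deriv {R : realType} {n : nat} {Z : normedModType R}
  (M : 'rV[R]_n -> set Z) (g : R) (xbar : 'rV[R]_n) (zbar : Z)
  (u : 'rV[R]_n) (w : Z) : Prop :=
  exists (uk : nat -> 'rV[R]_n) (wk : nat -> Z) (tk : nat -> R),
    uk @ \oo --> u /\ wk @ \oo --> w /\ tends_down_to0 tk /\
    forall k, gph M (xbar + tk k *: uk k,
                     zbar + powR (tk k * enorm (uk k)) g *: wk k).

Definition kerD {R : realType} {n : nat} {Z : normedModType R}
  (M : 'rV[R]_n -> set Z) (g : R) (xbar : 'rV[R]_n) (zbar : Z) : set 'rV[R]_n :=
  [set u | pseudo_deriv M g xbar zbar u 0].

Definition M0 {R : realType} {n : nat} (phi : 'rV[R]_n -> R) (x : 'rV[R]_n) : set R :=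
  [set r | phi x <= r].

Definition Mmap {R : realType} {n m : nat} (phi : 'rV[R]_n -> R)
  (Phi : 'rV[R]_n -> set 'rV[R]_m) (x : 'rV[R]_n) : set (R * 'rV[R]_m) :=
  [set p | M0 phi x p.1 /\ Phi x p.2].

(* Since M0 x is the half-line [phi x, +oo), dist(phi xbar, M0 x) = max(0, phi x - phi xbar),
   so the first quotient tends to 0 exactly when there are alpha_k -> 0 with
   phi (xbar + t_k u_k) <= phi xbar + (t_k |u_k|)^g0 alpha_k.  For Phi, a point
   ybar + (t_k |u_k|)^g v_k of Phi (xbar + t_k u_k) bounds the distance by (t_k |u_k|)^g |v_k|;
   conversely, a point of Phi (xbar + t_k u_k) within (t_k |u_k|)^g / (k+1) of the infimum
   yields such a v_k with |v_k| at most the quotient plus 1/(k+1).  As u <> 0, eventually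
   t_k |u_k| > 0 and the quotients are finite, and passing to a tail of the sequences turns
   "eventually" into "for all k".  For g0 = g the pair (alpha_k, v_k) is exactly the w_k of
   the pseudo-derivative of M. *)

From HB Require Import structures.
From mathcomp Require Import all_boot all_order all_algebra.
From mathcomp Require Import all_classical all_reals all_analysis.
Import Order.TTheory GRing.Theory Num.Theory.
Import numFieldNormedType.Exports.
Local Open Scope classical_set_scope.
Local Open Scope ring_scope.
Set Implicit Arguments. Unset Strict Implicit. Unset Printing Implicit Defensive.

Section Enorm.
Variables (R : realType) (n : nat).
Implicit Types (v : 'rV[R]_n).

Lemma enorm_ge0 v : 0 <= enorm v.
Proof. exact: sqrtr_ge0. Qed.

Lemma enormZ (c : R) v : enorm (c *: v) = `|c| * enorm v.
Proof.
rewrite /enorm -sqrtr_sqr -sqrtrM ?sqr_ge0 //; congr Num.sqrt.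
by rewrite mulr_sumr; apply: eq_bigr => i _; rewrite mxE exprMn.
Qed.

Lemma enormN v : enorm (- v) = enorm v.
Proof. by rewrite -scaleN1r enormZ normrN normr1 mul1r. Qed.

Lemma normr_coord_le_enorm v i : `|v ord0 i| <= enorm v.
Proof.
rewrite -sqrtr_sqr /enorm; apply: ler_wsqrtr.
by rewrite (bigD1 i) //= lerDl; apply: sumr_ge0 => j _; exact: sqr_ge0.
Qed.

Lemma normr_coord_le v i : `|v ord0 i| <= `|v|.
Proof.
rewrite [leRHS]/Num.Def.normr /= mx_normrE; apply/bigmax_geP; right.
by exists (ord0, i).
Qed.

Lemma normr_le_enorm v : `|v| <= enorm v.
Proof.
rewrite [leLHS]/Num.Def.normr /= mx_normrE.
apply: bigmax_le => [|[i j] _]; first exact: enorm_ge0.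
by rewrite /= (ord1 i); exact: normr_coord_le_enorm.
Qed.

Lemma enorm_le_normr v : enorm v <= `|v| * Num.sqrt n%:R.
Proof.
rewrite mulrC -(@ger0_norm _ `|v|) // -sqrtr_sqr -sqrtrM ?ler0n //.
apply: ler_wsqrtr.
have -> : n%:R * `|v| ^+ 2 = \sum_(i < n) `|v| ^+ 2.
  by rewrite sumr_const card_ord mulr_natl.
apply: ler_sum => i _; rewrite -real_normK ?num_real //.
by rewrite lerXn2r ?nnegrE //; exact: normr_coord_le.
Qed.

Lemma enorm_gt0 v : (0 < enorm v) = (v != 0).
Proof.
apply/idP/idP => [|v0]; last by apply: lt_le_trans (normr_le_enorm v); rewrite normr_gt0.
by apply: contraTneq => ->; rewrite -[X in enorm X](scale0r 0) enormZ normr0 mul0r ltxx.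
Qed.

Lemma cvg_enorm0P (T : Type) (F : set_system T) (FF : Filter F) (v : T -> 'rV[R]_n) :
  v @ F --> (0 : 'rV[R]_n) <-> (fun k => enorm (v k)) @ F --> (0 : R).
Proof.
split=> [v0|ev0]; last first.
  apply: norm_cvg0; apply: (squeeze_cvgr _ (cvg_cst 0) ev0).
  by apply: nearW => k; rewrite normr_ge0 normr_le_enorm.
have h : (fun k => `|v k| * Num.sqrt n%:R) @ F --> (0 : R).
  by rewrite -(mul0r (Num.sqrt n%:R)) -(@normr0 _ 'rV[R]_n); exact: cvgMl (cvg_norm v0).
apply: (squeeze_cvgr _ (cvg_cst 0) h); apply: nearW => k.
by rewrite enorm_ge0 enorm_le_normr.
Qed.

End Enorm.

Section SetDist.
Variable R : realType.

Lemma setdist_rV_ge0 m (a : 'rV[R]_m) S : (0 <= setdist_rV a S)%E.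
Proof. by apply/ereal_infP => _ [s _ <-]; rewrite lee_fin enorm_ge0. Qed.

Lemma setdist_rV_le m (a s : 'rV[R]_m) S : S s -> (setdist_rV a S <= (enorm (a - s))%:E)%E.
Proof. by move=> Ss; apply: ereal_inf_lbound; exists s. Qed.

Lemma setdist_rV_approx m (a : 'rV[R]_m) (S : nat -> set 'rV[R]_m) (e : nat -> R) :
  exists y : nat -> 'rV[R]_m, forall k, 0 < e k -> setdist_rV a (S k) \is a fin_num ->
    S k (y k) /\ enorm (a - y k) < fine (setdist_rV a (S k)) + e k.
Proof.
suff /choice[y y_approx] : forall k, exists yk : 'rV[R]_m,
    0 < e k -> setdist_rV a (S k) \is a fin_num ->
    S k yk /\ enorm (a - yk) < fine (setdist_rV a (S k)) + e k by exists y.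
move=> k.
have [[e0 dfin]|nfin] := pselect (0 < e k /\ setdist_rV a (S k) \is a fin_num); last first.
  by exists 0 => e0 dfin; exfalso; exact: nfin.
have [_ [s Ss <-] lt_s] := lb_ereal_inf_adherent e0 dfin.
by exists s => _ _; split; rewrite // -lte_fin EFinD fineK.
Qed.

Lemma setdist_M0 n (phi : 'rV[R]_n -> R) (a : R) x :
  setdist_R a (M0 phi x) = (Num.max 0 (phi x - a))%:E.
Proof.
apply/le_anti/andP; split.
  apply: ereal_inf_lbound; exists (Num.max a (phi x)); first by rewrite /M0 /= le_max lexx orbT.
  have [le_a|lt_a] := leP a (phi x).
    by rewrite distrC ger0_norm ?subr_ge0 // (max_idPr _) ?subr_ge0.
  by rewrite subrr normr0 (max_idPl _) // subr_le0 ltW.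
apply/ereal_infP => _ [s Ss <-]; rewrite lee_fin ge_max normr_ge0 /= distrC.
by apply: le_trans (ler_norm _); exact: lerB.
Qed.

End SetDist.

Section Scaled.
Variable R : realType.
Implicit Types (d : \bar R) (p c : R).

Lemma scaled_le d p c : 0 <= p -> 0 <= c -> (d <= (p * c)%:E)%E ->
  (d * (p^-1)%:E <= c%:E)%E.
Proof.
move=> p0 c0 le_d; have [->|pn0] := eqVneq p 0; first by rewrite invr0 mule0 lee_fin.
apply: le_trans (lee_wpmul2r _ le_d) _; first by rewrite lee_fin invr_ge0.
by rewrite -EFinM mulrAC divff // mul1r.
Qed.

Lemma scaled_fin_num d p : (0 <= d)%E -> 0 < p ->
  (d * (p^-1)%:E)%E \is a fin_num -> d \is a fin_num.
Proof.
by case: d => [r| |] //= _ p0; rewrite gt0_mulye // lte_fin invr_gt0.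
Qed.

Lemma scaled_cvg0 (d : nat -> \bar R) (p b : nat -> R) :
  (forall k, 0 <= d k)%E -> (forall k, 0 <= p k) -> (forall k, 0 <= b k) ->
  (forall k, d k <= (p k * b k)%:E)%E -> b @ \oo --> 0 ->
  (fun k => d k * ((p k)^-1)%:E)%E @ \oo --> 0%E.
Proof.
move=> d0 p0 b0 le_d b_0.
have bE : (fun k => (b k)%:E) @ \oo --> 0%E by apply: cvg_EFin; [exact: nearW|].
apply: (squeeze_cvge _ (cvg_cst 0%E) bE); apply: nearW => k.
by rewrite mule_ge0 ?lee_fin ?invr_ge0 //= scaled_le.
Qed.

Lemma enorm_scaled_lt m (a y : 'rV[R]_m) (r : R) p c : 0 < p ->
  enorm (a - y) < r + p * c -> enorm (p^-1 *: (y - a)) < r / p + c.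
Proof.
move=> p0 lt_y; rewrite enormZ ger0_norm ?invr_ge0 ?ltW // -opprB enormN.
by rewrite -(ltr_pM2l p0) mulrA divff ?gt_eqF // mul1r mulrDr mulrCA divff ?gt_eqF // mulr1.
Qed.

End Scaled.

Section ScaledDistance.
Variables (R : realType) (n m : nat).

Lemma setdist_M0_scaled_cvg0 (phi : 'rV[R]_n -> R) c (x : nat -> 'rV[R]_n)
    (p a : nat -> R) :
  (forall k, 0 <= p k) -> a @ \oo --> 0 -> (forall k, phi (x k) <= c + p k * a k) ->
  (fun k => setdist_R c (M0 phi (x k)) * ((p k)^-1)%:E)%E @ \oo --> 0%E.
Proof.
move=> p0 a0 le_phi; apply: (@scaled_cvg0 _ _ _ (fun k => `|a k|)) => // k.
- by rewrite setdist_M0 lee_fin le_max lexx.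
- rewrite setdist_M0 lee_fin ge_max mulr_ge0 //= lerBlDl (le_trans (le_phi k)) //.
  by rewrite lerD2l ler_wpM2l // ler_norm.
- have := cvg_norm a0; rewrite normr0; exact.
Qed.

Lemma setdist_M0_scaled_cvg0_approx (phi : 'rV[R]_n -> R) c (x : nat -> 'rV[R]_n)
    (p : nat -> R) :
  (fun k => setdist_R c (M0 phi (x k)) * ((p k)^-1)%:E)%E @ \oo --> 0%E ->
  exists2 a : nat -> R, a @ \oo --> 0 & forall k, 0 < p k -> phi (x k) <= c + p k * a k.
Proof.
under eq_fun do rewrite setdist_M0 -EFinM.
move/fine_cvgP => [_ a0]; exists (fun k => Num.max 0 (phi (x k) - c) / p k) => // k p0.
by rewrite mulrC divfK ?gt_eqF // -lerBlDl le_max lexx orbT.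
Qed.

Lemma setdist_rV_scaled_cvg0 (a : 'rV[R]_m) (S : nat -> set 'rV[R]_m) (p : nat -> R)
    (v : nat -> 'rV[R]_m) :
  (forall k, 0 <= p k) -> v @ \oo --> (0 : 'rV[R]_m) -> (forall k, S k (a + p k *: v k)) ->
  (fun k => setdist_rV a (S k) * ((p k)^-1)%:E)%E @ \oo --> 0%E.
Proof.
move=> p0 v0 Sv; apply: (@scaled_cvg0 _ _ _ (fun k => enorm (v k))) => //.
- by move=> k; exact: setdist_rV_ge0.
- by move=> k; exact: enorm_ge0.
- move=> k; have := setdist_rV_le a (Sv k).
  by rewrite opprD addNKr enormN enormZ ger0_norm.
- exact/cvg_enorm0P.
Qed.

Lemma setdist_rV_scaled_cvg0_approx (a : 'rV[R]_m) (S : nat -> set 'rV[R]_m)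
    (p : nat -> R) :
  (\forall k \near \oo, 0 < p k) ->
  (fun k => setdist_rV a (S k) * ((p k)^-1)%:E)%E @ \oo --> 0%E ->
  exists2 v : nat -> 'rV[R]_m, v @ \oo --> (0 : 'rV[R]_m) &
    \forall k \near \oo, S k (a + p k *: v k).
Proof.
move=> p0 /fine_cvgP[ratio_fin ratio0].
have dfin : \forall k \near \oo, setdist_rV a (S k) \is a fin_num.
  near=> k; have pk : 0 < p k by near: k.
  by apply: (scaled_fin_num (setdist_rV_ge0 _ _) pk); near: k.
have [y y_approx] := setdist_rV_approx a S (fun k => p k * k.+1%:R^-1).
have {}y_approx : \forall k \near \oo, S k (y k) /\
    enorm ((p k)^-1 *: (y k - a)) < fine (setdist_rV a (S k) * ((p k)^-1)%:E) + k.+1%:R^-1.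
  near=> k; have pk : 0 < p k by near: k.
  have dk : setdist_rV a (S k) \is a fin_num by near: k.
  have [Sy lt_y] := y_approx k (divr_gt0 pk (ltr0Sn _ _)) dk.
  by split; rewrite // -(fineK dk) -EFinM /=; exact: enorm_scaled_lt.
exists (fun k => (p k)^-1 *: (y k - a)).
  have ub0 : (fun k => fine (setdist_rV a (S k) * ((p k)^-1)%:E) + k.+1%:R^-1)
      @ \oo --> (0 : R).
    by rewrite -[0 : R]addr0; exact: cvgD ratio0 cvg_harmonic.
  apply/cvg_enorm0P; apply: (squeeze_cvgr _ (cvg_cst 0) ub0); near=> k.
  by rewrite enorm_ge0 /= ltW //; near: k; apply: filterS y_approx => k [].
near=> k; have pk : 0 < p k by near: k.
rewrite scalerA divff ?gt_eqF // scale1r addrC subrK.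
by near: k; apply: filterS y_approx => k [].
Unshelve. all: end_near.
Qed.

End ScaledDistance.

Section Critical.
Variables (R : realType) (n m : nat) (phi : 'rV[R]_n -> R)
  (Phi : 'rV[R]_n -> set 'rV[R]_m) (ybar : 'rV[R]_m) (xbar : 'rV[R]_n).

Definition dist_critical (g0 g : R) (u : 'rV[R]_n) : Prop :=
  exists (uk : nat -> 'rV[R]_n) (tk : nat -> R),
    uk @ \oo --> u /\ tends_down_to0 tk /\
    (fun k => (setdist_R (phi xbar) (M0 phi (xbar + tk k *: uk k)%R)
               * ((powR (tk k * enorm (uk k)) g0)^-1)%R%:E)%E) @ \oo --> (0 : \bar R) /\
    (fun k => (setdist_rV ybar (Phi (xbar + tk k *: uk k)%R)
               * ((powR (tk k * enorm (uk k)) g)^-1)%R%:E)%E) @ \oo --> (0 : \bar R).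

Lemma critical_eventually g0 g u (uk : nat -> 'rV[R]_n) (ak : nat -> R)
    (vk : nat -> 'rV[R]_m) (tk : nat -> R) :
  uk @ \oo --> u -> ak @ \oo --> 0 -> vk @ \oo --> (0 : 'rV[R]_m) -> tends_down_to0 tk ->
  (\forall k \near \oo,
    epi phi (xbar + tk k *: uk k, phi xbar + powR (tk k * enorm (uk k)) g0 * ak k) /\
    gph Phi (xbar + tk k *: uk k, ybar + powR (tk k * enorm (uk k)) g *: vk k)) ->
  critical phi Phi ybar xbar g0 g u.
Proof.
move=> u_lim a0 v0 [t_gt0 t0] [N _ tail].
exists (fun k => uk (k + N)), (fun k => ak (k + N)), (fun k => vk (k + N)),
  (fun k => tk (k + N)).
have tail_shift k := tail (k + N)%N (leq_addl k N).
split; [|split; [|split; [|split; [|split]]]].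
- by rewrite (cvg_shiftn N).
- by rewrite (cvg_shiftn N).
- by rewrite (cvg_shiftn N).
- by split=> [k|]; [exact: t_gt0 | rewrite (cvg_shiftn N)].
- by move=> k; have [] := tail_shift k.
- by move=> k; have [] := tail_shift k.
Qed.

Lemma critical_dist_critical g0 g u :
  critical phi Phi ybar xbar g0 g u -> dist_critical g0 g u.
Proof.
move=> [uk [ak [vk [tk [u_lim [a0 [v0 [t_down [epi_k gph_k]]]]]]]]].
exists uk, tk; do 3!split => //.
  by apply: setdist_M0_scaled_cvg0 a0 epi_k => k; exact: powR_ge0.
by apply: setdist_rV_scaled_cvg0 v0 gph_k => k; exact: powR_ge0.
Qed.

Lemma eventually_step_gt0 (u : 'rV[R]_n) (uk : nat -> 'rV[R]_n) (tk : nat -> R) : u != 0 ->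
  uk @ \oo --> u -> (forall k, 0 < tk k) -> \forall k \near \oo, 0 < tk k * enorm (uk k).
Proof.
move=> u0 u_lim t_gt0.
have : \forall k \near \oo, 0 < `|uk k| by apply: (cvgr_gt _ (cvg_norm u_lim)); rewrite normr_gt0.
by apply: filterS => k uk0; rewrite mulr_gt0 // enorm_gt0 -normr_gt0.
Qed.

Lemma dist_critical_critical g0 g u : u != 0 ->
  dist_critical g0 g u -> critical phi Phi ybar xbar g0 g u.
Proof.
move=> u0 [uk [tk [u_lim [t_down [dist0 dist]]]]].
have step0 := eventually_step_gt0 u0 u_lim t_down.1.
have [a a0 epi_a] := setdist_M0_scaled_cvg0_approx dist0.
have [v v0 gph_v] := setdist_rV_scaled_cvg0_approx
  (filterS (fun k => powR_gt0 g) step0) dist.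
apply: (critical_eventually u_lim a0 v0 t_down); near=> k; split.
  by apply: epi_a; apply: powR_gt0; near: k.
by near: k.
Unshelve. all: end_near.
Qed.

Lemma critical_kerD g u : critical phi Phi ybar xbar g g u <->
  kerD (Mmap phi Phi) g xbar (phi xbar, ybar) u.
Proof.
split.
  move=> [uk [ak [vk [tk [u_lim [a0 [v0 [t_down [epi_k gph_k]]]]]]]]].
  exists uk, (fun k => (ak k, vk k)), tk; do !split => //; [|exact: epi_k|exact: gph_k].
  exact: (cvg_pair a0 v0).
move=> [uk [wk [tk [u_lim [w0 [t_down M_k]]]]]].
exists uk, (fun k => (wk k).1), (fun k => (wk k).2), tk; do !split => //.
- exact: cvg_comp w0 cvg_fst.
- exact: cvg_comp w0 cvg_snd.
- by move=> k; have [] := M_k k.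
- by move=> k; have [] := M_k k.
Qed.

End Critical.

Theorem proposition4p5 (R : realType) (n m : nat)
  (phi : 'rV[R]_n -> R) (Phi : 'rV[R]_n -> set 'rV[R]_m)
  (ybar : 'rV[R]_m) (xbar : 'rV[R]_n) (g0 g : R) (u : 'rV[R]_n) :
  locally_lipschitz phi ->
  closed (gph Phi) ->
  (exists x, Phi x ybar) ->
  Phi xbar ybar ->
  1 <= g0 -> 1 <= g ->
  enorm u = 1 ->
  (critical phi Phi ybar xbar g0 g u <->
   exists (uk : nat -> 'rV[R]_n) (tk : nat -> R),
     uk @ \oo --> u /\ tends_down_to0 tk /\
     (fun k => (setdist_R (phi xbar) (M0 phi (xbar + tk k *: uk k)%R)
                * ((powR (tk k * enorm (uk k)) g0)^-1)%R%:E)%E) @ \oo --> (0 : \bar R) /\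
     (fun k => (setdist_rV ybar (Phi (xbar + tk k *: uk k)%R)
                * ((powR (tk k * enorm (uk k)) g)^-1)%R%:E)%E) @ \oo --> (0 : \bar R))
  /\
  (g0 = g ->
   (critical phi Phi ybar xbar g0 g u <->
    kerD (Mmap phi Phi) g xbar (phi xbar, ybar) u)).
Proof.
move=> _ _ _ _ _ _ u1.
have u0 : u != 0 by rewrite -enorm_gt0 u1.
split; last by move=> <-; exact: critical_kerD.
split; [exact: critical_dist_critical | exact: dist_critical_critical].
Qed.
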